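(* Let $X$ be a space, let $Y$ be an extension of $X$ with compact remainder, let $\zeta Y$ be a compactification of $Y$, and let $\phi:\beta X\to\zeta Y$ be the continuous extension of the identity of $X$. Then $Y$ is pseudocompact (i.e. $Y\in\mathscr{U}(X)$) if and only if $\mathrm{cl}_{\beta X}(\beta X\setminus\upsilon X)\subseteq\phi^{-1}[Y\setminus X]$.
   Context: All spaces are completely regular Hausdorff. $\beta X$ is the Stone–Čech compactification and $\upsilon X\subseteq\beta X$ the Hewitt realcompactification of $X$. An extension of $X$ is a space containing $X$ as a dense subspace; its remainder is $Y\setminus X$. A space is pseudocompact if every continuous real-valued function on it is bounded. $\mathscr{U}(X)$ is the set of pseudocompact extensions of $X$ with compact remainder. *)

From Stdlib Require Import Reals List Classical.
Open Scope R_scope.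

Record Top := {
  pt :> Type;
  open : (pt -> Prop) -> Prop;
  open_full : open (fun _ => True);
  open_inter : forall U V, open U -> open V -> open (fun x => U x /\ V x);
  open_union : forall (I : Type) (F : I -> pt -> Prop),
      (forall i, open (F i)) -> open (fun x => exists i, F i x)
}.
Arguments open {t}.

Definition closure {S : Top} (A : S -> Prop) (x : S) : Prop :=
  forall U, open U -> U x -> exists y, U y /\ A y.

Definition dense {S : Top} (A : S -> Prop) : Prop :=
  forall U, open U -> (exists y, U y) -> exists y, U y /\ A y.

Definition hausdorff (S : Top) : Prop :=
  forall x y : S, x <> y -> exists U V, open U /\ open V /\ U x /\ V y /\
    (forall z, ~ (U z /\ V z)).

Definition compact_set {S : Top} (A : S -> Prop) : Prop :=
  forall (I : Type) (F : I -> S -> Prop), (forall i, open (F i)) ->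
    (forall y, A y -> exists i, F i y) ->
    exists l : list I, forall y, A y -> exists i, In i l /\ F i y.

Definition compact (S : Top) : Prop := @compact_set S (fun _ => True).

Definition continuous {S T : Top} (f : S -> T) : Prop :=
  forall V, open V -> open (fun x => V (f x)).

Definition continuous_on_R {S : Top} (A : S -> Prop) (f : S -> R) : Prop :=
  forall x, A x -> forall eps, eps > 0 ->
    exists U, open U /\ U x /\ forall y, U y -> A y -> Rabs (f y - f x) < eps.

Definition continuous_R {S : Top} (f : S -> R) : Prop :=
  continuous_on_R (fun _ => True) f.

Definition closed {S : Top} (F : S -> Prop) : Prop := open (fun x => ~ F x).

Definition tychonoff (S : Top) : Prop :=
  hausdorff S /\
  forall (F : S -> Prop) (x : S), closed F -> ~ F x ->
    exists f : S -> R, continuous_R f /\ f x = 0 /\ forall y, F y -> f y = 1.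

Definition continuous_on {S T : Top} (A : S -> Prop) (f : S -> T) : Prop :=
  forall V, open V -> exists U, open U /\ forall x, A x -> (V (f x) <-> U x).

Definition embedding_on {S T : Top} (A : S -> Prop) (e : S -> T) : Prop :=
  (forall x y, A x -> A y -> e x = e y -> x = y) /\
  continuous_on A e /\
  (forall U, open U -> exists V, open V /\ forall x, A x -> (U x <-> V (e x))).

Definition compactification_of {S : Top} (A : S -> Prop) (B : Top) (e : S -> B) : Prop :=
  compact B /\ hausdorff B /\ embedding_on A e /\
  dense (fun b => exists x, A x /\ b = e x).

Definition stone_cech_of {S : Top} (A : S -> Prop) (B : Top) (e : S -> B) : Prop :=
  compactification_of A B e /\
  forall (K : Top) (f : S -> K), compact K -> hausdorff K -> continuous_on A f ->
    exists g : B -> K, continuous g /\ forall x, A x -> g (e x) = f x.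

(* Hewitt realcompactification of the subspace A of S, as a subset of its
   Stone-Cech compactification (B, e): the points p of B such that every
   f in C(A) extends continuously to A \cup {p}. *)
Definition hewitt_in {S : Top} (A : S -> Prop) (B : Top) (e : S -> B) (p : B) : Prop :=
  forall f : S -> R, continuous_on_R A f ->
    exists g : B -> R,
      continuous_on_R (fun b => b = p \/ exists x, A x /\ b = e x) g /\
      forall x, A x -> g (e x) = f x.

Definition pseudocompact (S : Top) : Prop :=
  forall f : S -> R, continuous_R f -> exists M, forall y, Rabs (f y) <= M.

From Stdlib Require Import Reals List Classical.
From Stdlib Require Import Lra FunctionalExtensionality PropExtensionality ClassicalEpsilon ProofIrrelevance.
Open Scope R_scope.

(* If Y is pseudocompact and phi b lies outside the compact set Y \ X, separate
   phi b from Y \ X by disjoint open sets W, W'.  Every f in C(X) times a cutoff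
   that is 1 off W' and 0 near Y \ X is continuous on Y, hence bounded, hence
   extends over bX; over phi^-1[W] that extension agrees with f, so the whole
   neighbourhood phi^-1[W] of b lies in vX and b is not in cl(bX \ vX).
   Conversely, given f in C(Y), its restriction to X is bounded near each point
   of bX (near Hewitt points by the extension of f|X, near the other points
   because phi maps them into Y \ X, where f is locally bounded); compactness of
   bX and of Y \ X then bound f. *)

Lemma open_ext {S : Top} (U V : S -> Prop) :
  (forall x, U x <-> V x) -> open U -> open V.
Proof.
  intros HUV HU.
  replace V with U; [exact HU|].
  apply functional_extensionality; intro x; apply propositional_extensionality, HUV.
Qed.

Lemma open_of_locally_open {S : Top} (P : S -> Prop) :
  (forall x, P x -> exists U, open U /\ U x /\ forall y, U y -> P y) -> open P.
Proof.
  intro Hloc.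
  pose (Idx := {U : S -> Prop | open U /\ forall y, U y -> P y}).
  apply (open_ext (fun x => exists i : Idx, proj1_sig i x)).
  - intro x; split.
    + intros [i Hx]; exact (proj2 (proj2_sig i) x Hx).
    + intro Px; destruct (Hloc x Px) as [U [HU [Ux HUP]]].
      exists (exist _ U (conj HU HUP)); exact Ux.
  - apply open_union; intro i; exact (proj1 (proj2_sig i)).
Qed.

Lemma open_forall_in {S : Top} {I : Type} (l : list I) (P : I -> S -> Prop) :
  (forall i, In i l -> open (P i)) -> open (fun z => forall i, In i l -> P i z).
Proof.
  induction l as [|a l IH]; intro HP.
  - apply (open_ext (fun _ => True)); [|apply open_full].
    intro z; split; [intros _ i []|auto].
  - apply (open_ext (fun z => P a z /\ forall i, In i l -> P i z)).
    + intro z; split.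
      * intros [Ha Hl] i [<-|Hi]; auto.
      * intro Hz; split; [apply Hz; left|intros i Hi; apply Hz; right]; auto.
    + apply open_inter; [apply HP; left; auto|].
      apply IH; intros i Hi; apply HP; right; exact Hi.
Qed.

Lemma open_exists_in {S : Top} {I : Type} (l : list I) (P : I -> S -> Prop) :
  (forall i, open (P i)) -> open (fun z => exists i, In i l /\ P i z).
Proof.
  intro HP.
  apply (open_ext (fun z => exists i : {i | In i l}, P (proj1_sig i) z)).
  - intro z; split.
    + intros [[i Hi] Hz]; eauto.
    + intros [i [Hi Hz]]; exists (exist _ i Hi); exact Hz.
  - apply open_union; intros [i Hi]; apply HP.
Qed.

Lemma embedding_continuous {S T : Top} (e : S -> T) :
  embedding_on (fun _ => True) e -> continuous e.
Proof.
  intros [_ [He _]] V HV.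
  destruct (He V HV) as [U [HU HUV]].
  apply (open_ext U); [|exact HU].
  intro x; symmetry; apply HUV; exact I.
Qed.

(* The finite subcover of the images [k y] gives finitely many separating pairs;
   intersect the neighbourhoods of [t] and unite those of the image. *)
Lemma separate_point_compact_image {S T : Top} (A : S -> Prop) (k : S -> T) (t : T) :
  hausdorff T -> continuous k -> compact_set A -> (forall y, A y -> k y <> t) ->
  exists U V, open U /\ open V /\ U t /\ (forall y, A y -> V (k y)) /\
    (forall z, ~ (U z /\ V z)).
Proof.
  intros HT Hk HA Hne.
  pose (Idx := {q : (T -> Prop) * (T -> Prop) | open (fst q) /\ open (snd q) /\ fst q t /\
               forall z, ~ (fst q z /\ snd q z)}).
  destruct (HA Idx (fun i y => snd (proj1_sig i) (k y))) as [l Hl].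
  - intro i; apply Hk; exact (proj1 (proj2 (proj2_sig i))).
  - intros y Ay.
    assert (Hty : t <> k y) by (intro E; apply (Hne y Ay); auto).
    destruct (HT _ _ Hty) as [U [V [HU [HV [Ut [Vy HUV]]]]]].
    exists (exist _ (U, V) (conj HU (conj HV (conj Ut HUV)))); exact Vy.
  - exists (fun z => forall i, In i l -> fst (proj1_sig i) z),
           (fun z => exists i, In i l /\ snd (proj1_sig i) z).
    repeat split.
    + apply open_forall_in; intros i _; exact (proj1 (proj2_sig i)).
    + apply open_exists_in; intro i; exact (proj1 (proj2 (proj2_sig i))).
    + intros i _; exact (proj1 (proj2 (proj2 (proj2_sig i)))).
    + intros y Ay; destruct (Hl y Ay) as [i [Hi Hy]]; eauto.
    + intros z [HUz [i [Hi HVz]]].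
      exact (proj2 (proj2 (proj2 (proj2_sig i))) z (conj (HUz i Hi) HVz)).
Qed.

Lemma compact_set_closed {S : Top} (K : S -> Prop) :
  hausdorff S -> compact_set K -> closed K.
Proof.
  intros HS HK. apply open_of_locally_open. intros x Kx.
  destruct (separate_point_compact_image K (fun y => y) x HS (fun V HV => HV) HK)
    as [U [V [HU [_ [Ux [HKV HUV]]]]]].
  - intros y Ky E; subst; contradiction.
  - exists U; repeat split; auto.
    intros z Uz Kz; exact (HUV z (conj Uz (HKV z Kz))).
Qed.

Definition Rcontinuous1 (g : R -> R) : Prop :=
  forall a0 eps, eps > 0 -> exists d, d > 0 /\
    forall a, Rabs (a - a0) < d -> Rabs (g a - g a0) < eps.

Definition Rcontinuous2 (op : R -> R -> R) : Prop :=
  forall a0 b0 eps, eps > 0 -> exists d, d > 0 /\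
    forall a b, Rabs (a - a0) < d -> Rabs (b - b0) < d -> Rabs (op a b - op a0 b0) < eps.

Lemma Rcontinuous1_clamp : Rcontinuous1 (fun a => Rmax 0 (2 * a - 1)).
Proof.
  intros a0 eps Heps; exists (eps / 2); split; [lra|]; intros a Ha.
  unfold Rmax; destruct (Rle_dec 0 (2 * a - 1)), (Rle_dec 0 (2 * a0 - 1));
    revert Ha; split_Rabs; lra.
Qed.

Lemma Rcontinuous2_Rmin : Rcontinuous2 Rmin.
Proof.
  intros a0 b0 eps Heps; exists eps; split; [exact Heps|]; intros a b Ha Hb.
  unfold Rmin; destruct (Rle_dec a b), (Rle_dec a0 b0); revert Ha Hb; split_Rabs; lra.
Qed.

(* [a b - a0 b0 = (a - a0) b + a0 (b - b0)] with [|b| <= |b0| + 1]. *)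
Lemma Rcontinuous2_Rmult : Rcontinuous2 Rmult.
Proof.
  intros a0 b0 eps Heps.
  set (K := Rabs a0 + Rabs b0 + 1).
  assert (HK : K > 0) by (pose proof (Rabs_pos a0); pose proof (Rabs_pos b0); unfold K; lra).
  set (d := Rmin 1 (eps / (2 * K))).
  assert (Hd1 : d <= 1) by apply Rmin_l.
  assert (Hd2 : d * K <= eps / 2).
  { apply Rle_trans with (eps / (2 * K) * K).
    - apply Rmult_le_compat_r; [lra|apply Rmin_r].
    - right; field; lra. }
  assert (Hd : d > 0) by (apply Rmin_pos; [lra|apply Rdiv_lt_0_compat; lra]).
  exists d; split; [exact Hd|]; intros a b Ha Hb.
  replace (a * b - a0 * b0) with ((a - a0) * b + a0 * (b - b0)) by ring.
  eapply Rle_lt_trans; [apply Rabs_triang|]; rewrite !Rabs_mult.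
  assert (Hbb : Rabs b <= Rabs b0 + 1).
  { replace b with ((b - b0) + b0) by ring.
    eapply Rle_trans; [apply Rabs_triang|lra]. }
  assert (Rabs (a - a0) * Rabs b <= d * (Rabs b0 + 1))
    by (apply Rmult_le_compat; try apply Rabs_pos; lra).
  assert (Rabs a0 * Rabs (b - b0) <= Rabs a0 * d)
    by (apply Rmult_le_compat_l; [apply Rabs_pos|lra]).
  unfold K in Hd2; nra.
Qed.

Lemma continuous_on_R_const {S : Top} (A : S -> Prop) (c : R) :
  continuous_on_R A (fun _ => c).
Proof.
  intros x _ eps Heps; exists (fun _ => True); repeat split; [apply open_full|].
  intros; rewrite Rminus_diag, Rabs_R0; lra.
Qed.

Lemma continuous_on_R_sub {S : Top} (A B : S -> Prop) (f : S -> R) :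
  (forall x, B x -> A x) -> continuous_on_R A f -> continuous_on_R B f.
Proof.
  intros HBA Hf x Bx eps Heps.
  destruct (Hf x (HBA x Bx) eps Heps) as [U [HU [Ux Hfx]]].
  exists U; repeat split; auto.
Qed.

Lemma continuous_on_R_comp {S : Top} (A : S -> Prop) (f : S -> R) (g : R -> R) :
  Rcontinuous1 g -> continuous_on_R A f -> continuous_on_R A (fun x => g (f x)).
Proof.
  intros Hg Hf x Ax eps Heps.
  destruct (Hg (f x) eps Heps) as [d [Hd Hgd]].
  destruct (Hf x Ax d Hd) as [U [HU [Ux Hfx]]].
  exists U; repeat split; auto.
Qed.

Lemma continuous_on_R_op {S : Top} (A : S -> Prop) (op : R -> R -> R) (f g : S -> R) :
  Rcontinuous2 op -> continuous_on_R A f -> continuous_on_R A g ->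
  continuous_on_R A (fun x => op (f x) (g x)).
Proof.
  intros Hop Hf Hg x Ax eps Heps.
  destruct (Hop (f x) (g x) eps Heps) as [d [Hd Hopd]].
  destruct (Hf x Ax d Hd) as [U [HU [Ux Hfx]]].
  destruct (Hg x Ax d Hd) as [V [HV [Vx Hgx]]].
  exists (fun y => U y /\ V y); repeat split; auto; [apply open_inter; auto|].
  intros y [Uy Vy] Ay; apply Hopd; auto.
Qed.

Lemma continuous_on_R_locally_bounded {S : Top} (A : S -> Prop) (f : S -> R) (x : S) :
  continuous_on_R A f -> A x ->
  exists U, open U /\ U x /\ forall y, U y -> A y -> Rabs (f y) <= Rabs (f x) + 1.
Proof.
  intros Hf Ax.
  destruct (Hf x Ax 1 Rlt_0_1) as [U [HU [Ux Hfx]]].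
  exists U; repeat split; auto.
  intros y Uy Ay; specialize (Hfx y Uy Ay); revert Hfx; split_Rabs; lra.
Qed.

Lemma open_continuous_R_lt {S : Top} (g : S -> R) (c : R) :
  continuous_R g -> open (fun z => g z < c).
Proof.
  intro Hg; apply open_of_locally_open; intros x Hx.
  destruct (Hg x I (c - g x) ltac:(lra)) as [U [HU [Ux Hgx]]].
  exists U; repeat split; auto.
  intros y Uy; specialize (Hgx y Uy I); revert Hgx; split_Rabs; lra.
Qed.

Definition min_list {S : Type} {I : Type} (l : list I) (g : I -> S -> R) (z : S) : R :=
  fold_right (fun i acc => Rmin (g i z) acc) 1 l.

Lemma continuous_R_min_list {S : Top} {I : Type} (l : list I) (g : I -> S -> R) :
  (forall i, continuous_R (g i)) -> continuous_R (min_list l g).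
Proof.
  intro Hg; induction l as [|a l IH]; unfold min_list; simpl.
  - apply continuous_on_R_const.
  - exact (continuous_on_R_op _ Rmin (g a) (min_list l g) Rcontinuous2_Rmin (Hg a) IH).
Qed.

Lemma min_list_le {S : Type} {I : Type} (l : list I) (g : I -> S -> R) i z :
  In i l -> min_list l g z <= g i z.
Proof.
  induction l as [|a l IH]; unfold min_list in *; simpl; [tauto|].
  intros [<-|Hi]; [apply Rmin_l|eapply Rle_trans; [apply Rmin_r|auto]].
Qed.

Lemma min_list_const1 {S : Type} {I : Type} (l : list I) (g : I -> S -> R) z :
  (forall i, g i z = 1) -> min_list l g z = 1.
Proof.
  intro Hg; induction l as [|a l IH]; unfold min_list in *; simpl; auto.
  rewrite IH, Hg; apply Rmin_left; lra.
Qed.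

Definition max_list {I : Type} (l : list I) (m : I -> R) : R :=
  fold_right (fun i acc => Rmax (m i) acc) 0 l.

Lemma max_list_ge {I : Type} (l : list I) (m : I -> R) i :
  In i l -> m i <= max_list l m.
Proof.
  induction l as [|a l IH]; simpl; [tauto|].
  intros [<-|Hi]; [apply Rmax_l|eapply Rle_trans; [apply IH; auto|apply Rmax_r]].
Qed.

Lemma compact_set_uniform_bound {S : Top} {T : Type} (A : S -> Prop) (D : T -> Prop)
  (k : T -> S) (f : T -> R) :
  compact_set A ->
  (forall s, A s -> exists U m, open U /\ U s /\ forall t, D t -> U (k t) -> Rabs (f t) <= m) ->
  exists M, forall t, D t -> A (k t) -> Rabs (f t) <= M.
Proof.
  intros HA Hloc.
  pose (Idx := {q : (S -> Prop) * R | open (fst q) /\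
               forall t, D t -> fst q (k t) -> Rabs (f t) <= snd q}).
  destruct (HA Idx (fun i => fst (proj1_sig i))) as [l Hl].
  - intro i; exact (proj1 (proj2_sig i)).
  - intros s As; destruct (Hloc s As) as [U [m [HU [Us HUm]]]].
    exists (exist _ (U, m) (conj HU HUm)); exact Us.
  - exists (max_list l (fun i => snd (proj1_sig i))); intros t Dt Akt.
    destruct (Hl (k t) Akt) as [i [Hi Hit]].
    eapply Rle_trans; [exact (proj2 (proj2_sig i) t Dt Hit)|].
    exact (max_list_ge l (fun i => snd (proj1_sig i)) i Hi).
Qed.

(* A finite subcover of [K] by sets [g_i < 1/2], with [g_i = 1] on [C], gives
   [m = min g_i]; then [max 0 (2 m - 1)] is [1] on [C] and [0] on [m < 1/2]. *)
Lemma tychonoff_cutoff (Y : Top) (K C : Y -> Prop) :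
  tychonoff Y -> compact_set K -> closed C -> (forall y, K y -> ~ C y) ->
  exists h : Y -> R, continuous_R h /\ (forall z, C z -> h z = 1) /\
    forall y, K y -> exists U, open U /\ U y /\ forall z, U z -> h z = 0.
Proof.
  intros [_ HY] HK HC HKC.
  pose (Idx := {q : Y * (Y -> R) | K (fst q) /\ continuous_R (snd q) /\
                                 forall z, C z -> snd q z = 1}).
  pose (g := fun (i : Idx) => snd (proj1_sig i)).
  destruct (HK Idx (fun i z => g i z < 1/2)) as [l Hl].
  - intro i; apply open_continuous_R_lt; exact (proj1 (proj2 (proj2_sig i))).
  - intros y Ky.
    destruct (HY C y HC (HKC y Ky)) as [gy [Hgy [Hgy0 Hgy1]]].
    exists (exist _ (y, gy) (conj Ky (conj Hgy Hgy1))); unfold g; simpl; lra.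
  - pose (m := min_list l g).
    exists (fun z => Rmax 0 (2 * m z - 1)); repeat split.
    + apply (continuous_on_R_comp _ m (fun a => Rmax 0 (2 * a - 1)) Rcontinuous1_clamp).
      apply continuous_R_min_list; intro i; exact (proj1 (proj2 (proj2_sig i))).
    + intros z Cz; unfold m; rewrite min_list_const1; [rewrite Rmax_right; lra|].
      intro i; exact (proj2 (proj2 (proj2_sig i)) z Cz).
    + intros y Ky; destruct (Hl y Ky) as [i [Hi Hiy]].
      exists (fun z => g i z < 1/2); repeat split; auto.
      * apply open_continuous_R_lt; exact (proj1 (proj2 (proj2_sig i))).
      * intros z Hz; pose proof (min_list_le l g i z Hi); apply Rmax_left; unfold m; lra.
Qed.

Lemma continuous_R_mult_cutoff {S : Top} (X : S -> Prop) (f h : S -> R) :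
  open X -> continuous_on_R X f -> continuous_R h ->
  (forall y, ~ X y -> exists U, open U /\ U y /\ forall z, U z -> h z = 0) ->
  continuous_R (fun z => f z * h z).
Proof.
  intros HX Hf Hh Hh0 y _ eps Heps.
  destruct (classic (X y)) as [Xy|Xy].
  - destruct (continuous_on_R_op X Rmult f h Rcontinuous2_Rmult Hf
                (continuous_on_R_sub _ X h (fun _ _ => I) Hh) y Xy eps Heps)
      as [U [HU [Uy Hfh]]].
    exists (fun z => X z /\ U z); repeat split; auto; [apply open_inter; auto|].
    intros z [Xz Uz] _; exact (Hfh z Uz Xz).
  - destruct (Hh0 y Xy) as [U [HU [Uy HU0]]].
    exists U; repeat split; auto; intros z Uz _.
    rewrite (HU0 z Uz), (HU0 y Uy), !Rmult_0_r, Rminus_diag, Rabs_R0; lra.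
Qed.

(* The supremum [c] of the points up to which [[a, x]] has a finite subcover is
   covered together with a neighbourhood by one set; so [c] is reached and [c = b]. *)
Lemma segment_heine_borel (a b : R) (I : Type) (G : I -> R -> Prop) :
  (forall t, a <= t <= b -> exists i, G i t) ->
  (forall i t, a <= t <= b -> G i t -> exists d, d > 0 /\
     forall s, a <= s <= b -> Rabs (s - t) < d -> G i s) ->
  exists l, forall t, a <= t <= b -> exists i, In i l /\ G i t.
Proof.
  intros Hcov Hopen.
  destruct (Rle_dec a b) as [Hab|Hab]; [|exists nil; intros t Ht; lra].
  pose (E := fun x => a <= x <= b /\ exists l : list I,
                forall t, a <= t <= x -> exists i, In i l /\ G i t).
  assert (Ea : E a).
  { split; [lra|]. destruct (Hcov a) as [i Hi]; [lra|].
    exists (i :: nil); intros t Ht; replace t with a by lra.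
    exists i; split; [left|]; auto. }
  destruct (completeness E) as [c [Hub Hlub]];
    [exists b; intros x [Hx _]; lra|exists a; exact Ea|].
  assert (Hac : a <= c) by (apply Hub; exact Ea).
  assert (Hcb : c <= b) by (apply Hlub; intros x [Hx _]; lra).
  destruct (Hcov c) as [i Hi]; [lra|].
  destruct (Hopen i c (conj Hac Hcb) Hi) as [d [Hd Hid]].
  assert (Hx : exists x, E x /\ c - d < x).
  { apply NNPP; intro Hn.
    assert (c <= c - d); [|lra].
    apply Hlub; intros x Ex; apply Rnot_lt_le; intro Hlt; apply Hn; eauto. }
  destruct Hx as [x [[Hx [l Hl]] Hxc]].
  set (y := Rmin b (c + d / 2)).
  assert (Ey : E y).
  { split; [unfold y; split; [apply Rmin_case; lra|apply Rmin_l]|].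
    exists (i :: l); intros t Ht.
    destruct (Rle_dec t x) as [Htx|Htx].
    - destruct (Hl t) as [i' [Hi' Ht']]; [lra|]. exists i'; split; [right|]; auto.
    - exists i; split; [left; auto|].
      assert (t <= b /\ t <= c + d / 2) as [Htb Htc]
        by (unfold y in Ht; split; eapply Rle_trans; [|apply Rmin_l| |apply Rmin_r]; apply Ht).
      apply Hid; [lra|split_Rabs; lra]. }
  assert (Hyb : y = b).
  { assert (y <= c) by (apply Hub; exact Ey).
    unfold y in *; revert H; apply Rmin_case_strong; intros; lra. }
  destruct Ey as [_ [l' Hl']].
  exists l'; intros t Ht; apply Hl'; rewrite Hyb; exact Ht.
Qed.

Definition interval_pt (M : R) := {r : R | -M <= r <= M}.

Definition interval_open (M : R) (U : interval_pt M -> Prop) : Prop :=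
  forall r, U r -> exists d, d > 0 /\
    forall s : interval_pt M, Rabs (proj1_sig s - proj1_sig r) < d -> U s.

Lemma interval_open_full (M : R) : interval_open M (fun _ => True).
Proof. intros r _; exists 1; split; [lra|auto]. Qed.

Lemma interval_open_inter (M : R) U V :
  interval_open M U -> interval_open M V -> interval_open M (fun x => U x /\ V x).
Proof.
  intros HU HV r [Ur Vr].
  destruct (HU r Ur) as [d1 [Hd1 H1]], (HV r Vr) as [d2 [Hd2 H2]].
  exists (Rmin d1 d2); split; [apply Rmin_pos; auto|].
  intros s Hs; split; [apply H1|apply H2];
    eapply Rlt_le_trans; eauto; [apply Rmin_l|apply Rmin_r].
Qed.

Lemma interval_open_union (M : R) (I : Type) (F : I -> interval_pt M -> Prop) :
  (forall i, interval_open M (F i)) -> interval_open M (fun x => exists i, F i x).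
Proof.
  intros HF r [i Hi]; destruct (HF i r Hi) as [d [Hd Hid]].
  exists d; split; auto; intros s Hs; exists i; auto.
Qed.

Definition interval_top (M : R) : Top :=
  {| pt := interval_pt M; open := interval_open M; open_full := interval_open_full M;
     open_inter := interval_open_inter M; open_union := interval_open_union M |}.

Lemma interval_open_ball (M : R) (r : interval_pt M) (d : R) :
  interval_open M (fun s => Rabs (proj1_sig s - proj1_sig r) < d).
Proof.
  intros s Hs; exists (d - Rabs (proj1_sig s - proj1_sig r)); split; [lra|].
  intros u Hu; revert Hs Hu; split_Rabs; lra.
Qed.

Lemma interval_top_hausdorff (M : R) : hausdorff (interval_top M).
Proof.
  intros x y Hxy.
  assert (Hne : proj1_sig x <> proj1_sig y).
  { intro E; apply Hxy; destruct x, y; simpl in E; subst; f_equal; apply proof_irrelevance. }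
  set (d := Rabs (proj1_sig x - proj1_sig y) / 2).
  assert (Hd : d > 0)
    by (unfold d; pose proof (Rabs_pos_lt (proj1_sig x - proj1_sig y)); lra).
  exists (fun z : interval_pt M => Rabs (proj1_sig z - proj1_sig x) < d),
         (fun z : interval_pt M => Rabs (proj1_sig z - proj1_sig y) < d).
  repeat split; try apply interval_open_ball; try (rewrite Rminus_diag, Rabs_R0; lra).
  intros z [H1 H2]; unfold d in *; revert H1 H2; split_Rabs; lra.
Qed.

Lemma interval_top_compact (M : R) : compact_set (fun _ : interval_top M => True).
Proof.
  intros I F HF Hcov.
  destruct (segment_heine_borel (-M) M I
              (fun i t => exists H : -M <= t <= M, F i (exist _ t H))) as [l Hl].
  - intros t Ht; destruct (Hcov (exist _ t Ht) Logic.I) as [i Hi]; exists i, Ht; exact Hi.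
  - intros i t _ [H Hi]; destruct (HF i _ Hi) as [d [Hd Hid]].
    exists d; split; auto; intros s Hs Hst; exists Hs; apply Hid; exact Hst.
  - exists l; intros [t Ht] _; destruct (Hl t Ht) as [i [Hi [H' HF']]].
    exists i; split; auto; replace Ht with H' by apply proof_irrelevance; exact HF'.
Qed.

Lemma stone_cech_extend_bounded {Y bX : Top} (X : Y -> Prop) (e : Y -> bX)
  (F : Y -> R) (M : R) :
  stone_cech_of X bX e -> continuous_R F -> (forall y, Rabs (F y) <= M) ->
  exists g : bX -> R, continuous_R g /\ forall x, X x -> g (e x) = F x.
Proof.
  intros [_ Hext] HF HM.
  assert (HFM : forall y, -M <= F y <= M) by (intro y; specialize (HM y); split_Rabs; lra).
  pose (FM := fun y => exist (fun r => -M <= r <= M) (F y) (HFM y) : interval_top M).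
  destruct (Hext (interval_top M) FM (interval_top_compact M) (interval_top_hausdorff M))
    as [g [Hg Hge]].
  - intros V HV; exists (fun y => V (FM y)); split; [|tauto].
    apply open_of_locally_open; intros y Vy.
    destruct (HV (FM y) Vy) as [d [Hd HVd]].
    destruct (HF y I d Hd) as [U [HU [Uy HUd]]].
    exists U; repeat split; auto; intros z Uz; apply HVd, HUd; auto.
  - exists (fun b => proj1_sig (g b)); split.
    + intros b _ eps Heps.
      exists (fun c => Rabs (proj1_sig (g c) - proj1_sig (g b)) < eps); repeat split.
      * exact (Hg _ (interval_open_ball M (g b) eps)).
      * rewrite Rminus_diag, Rabs_R0; lra.
      * intros c Hc _; exact Hc.
    + intros x Xx; rewrite (Hge x Xx); reflexivity.
Qed.

(* Glue [g0] on [U] with [f] on [e[X]]; continuity at points of [e[X]] outside [U]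
   uses a neighbourhood missing [p], which exists since [bX] is Hausdorff. *)
Lemma extend_near_point {Y bX : Top} (X : Y -> Prop) (e : Y -> bX) (p : bX)
  (U : bX -> Prop) (g0 : bX -> R) (f : Y -> R) :
  hausdorff bX -> embedding_on X e -> open U -> U p -> continuous_R g0 ->
  continuous_on_R X f -> (forall x, X x -> U (e x) -> g0 (e x) = f x) ->
  exists g : bX -> R,
    continuous_on_R (fun b => b = p \/ exists x, X x /\ b = e x) g /\
    forall x, X x -> g (e x) = f x.
Proof.
  intros HbX [Hinj [_ He]] HU Up Hg0 Hf Hg0f.
  pose (g := fun b => match excluded_middle_informative (U b) with
                      | left _ => g0 b
                      | right _ =>
                          match excluded_middle_informative (exists x, X x /\ b = e x) with
                          | left H => f (proj1_sig (constructive_indefinite_description _ H))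
                          | right _ => 0
                          end
                      end).
  assert (gU : forall b, U b -> g b = g0 b).
  { intros b Ub; unfold g; destruct (excluded_middle_informative (U b)); tauto. }
  assert (gX : forall x, X x -> g (e x) = f x).
  { intros x Xx; unfold g.
    destruct (excluded_middle_informative (U (e x))) as [Ue|Ue]; [apply Hg0f; auto|].
    destruct (excluded_middle_informative (exists x0, X x0 /\ e x = e x0)) as [H|H].
    - destruct (constructive_indefinite_description _ H) as [x' [Xx' Ex']]; simpl.
      f_equal; symmetry; apply Hinj; auto.
    - exfalso; apply H; eauto. }
  exists g; split; [|exact gX].
  intros b Db eps Heps.
  destruct (classic (U b)) as [Ub|Ub].
  - destruct (Hg0 b I eps Heps) as [U1 [HU1 [U1b Hg0b]]].
    exists (fun c => U c /\ U1 c); repeat split; auto; [apply open_inter; auto|].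
    intros c [Uc U1c] _; rewrite (gU c Uc), (gU b Ub); apply Hg0b; auto.
  - assert (Hbp : b <> p) by (intro E; subst; tauto).
    destruct Db as [Db|[x [Xx ->]]]; [tauto|].
    destruct (HbX _ _ Hbp) as [Ub' [Vp [HUb' [HVp [Ub'b [Vpp Hdisj]]]]]].
    destruct (Hf x Xx eps Heps) as [U2 [HU2 [U2x Hfx]]].
    destruct (He U2 HU2) as [V2 [HV2 HV2e]].
    exists (fun c => Ub' c /\ V2 c); repeat split; auto;
      [apply open_inter; auto|apply HV2e; auto|].
    intros c [Ub'c V2c] [->|[x' [Xx' ->]]]; [exfalso; exact (Hdisj p (conj Ub'c Vpp))|].
    rewrite (gX x' Xx'), (gX x Xx); apply Hfx; auto; apply HV2e; auto.
Qed.

Lemma pseudocompact_hewitt_near (Y : Top) (X : Y -> Prop) (bX : Top) (e : Y -> bX)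
  (Z : Top) (j : Y -> Z) (phi : bX -> Z) (W W' : Z -> Prop) (c : bX) :
  tychonoff Y -> compact_set (fun y => ~ X y) -> stone_cech_of X bX e ->
  continuous j -> continuous phi -> (forall x, X x -> phi (e x) = j x) ->
  pseudocompact Y ->
  open W -> open W' -> (forall z, ~ (W z /\ W' z)) -> (forall y, ~ X y -> W' (j y)) ->
  W (phi c) -> hewitt_in X bX e c.
Proof.
  intros HY HK HbX Hj Hphi Hphij Hpc HW HW' HWW' HKW' Wc f Hf.
  assert (HX : open X).
  { apply (open_ext (fun y => ~ ~ X y)); [intro y; split; [apply NNPP|tauto]|].
    exact (compact_set_closed _ (proj1 HY) HK). }
  assert (HC : closed (fun z => ~ W' (j z))).
  { apply (open_ext (fun z => W' (j z))); [intro z; split; [tauto|apply NNPP]|].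
    exact (Hj W' HW'). }
  destruct (tychonoff_cutoff Y (fun y => ~ X y) (fun z => ~ W' (j z)) HY HK HC)
    as [h [Hh [Hh1 Hh0]]]; [intros y Hy H; exact (H (HKW' y Hy))|].
  assert (HF : continuous_R (fun z => f z * h z))
    by exact (continuous_R_mult_cutoff X f h HX Hf Hh Hh0).
  destruct (Hpc _ HF) as [M HM].
  destruct (stone_cech_extend_bounded X e _ M HbX HF HM) as [g [Hg Hge]].
  destruct HbX as [[_ [HbXh [He _]]] _].
  apply (extend_near_point X e c (fun b => W (phi b)) g f HbXh He (Hphi W HW) Wc Hg Hf).
  intros x Xx Wx; rewrite (Hge x Xx), Hh1; [ring|].
  rewrite (Hphij x Xx) in Wx; intro H; exact (HWW' (j x) (conj Wx H)).
Qed.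

Lemma pseudocompact_remainder_condition (Y : Top) (X : Y -> Prop) (bX : Top)
  (e : Y -> bX) (Z : Top) (j : Y -> Z) (phi : bX -> Z) :
  tychonoff Y -> compact_set (fun y => ~ X y) -> stone_cech_of X bX e ->
  compactification_of (fun _ => True) Z j -> continuous phi ->
  (forall x, X x -> phi (e x) = j x) -> pseudocompact Y ->
  forall b, closure (fun c => ~ hewitt_in X bX e c) b -> exists y, ~ X y /\ phi b = j y.
Proof.
  intros HY HK HbX [_ [HZ [Hj _]]] Hphi Hphij Hpc b Hb.
  apply NNPP; intro Hn.
  destruct (separate_point_compact_image (fun y => ~ X y) j (phi b) HZ
              (embedding_continuous j Hj) HK) as [W [W' [HW [HW' [Wb [HKW' HWW']]]]]].
  { intros y Hy E; apply Hn; exists y; auto. }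
  destruct (Hb (fun c => W (phi c)) (Hphi W HW) Wb) as [c [Wc Hc]].
  exact (Hc (pseudocompact_hewitt_near Y X bX e Z j phi W W' c HY HK HbX
               (embedding_continuous j Hj) Hphi Hphij Hpc HW HW' HWW' HKW' Wc)).
Qed.

Lemma remainder_condition_pseudocompact (Y : Top) (X : Y -> Prop) (bX : Top)
  (e : Y -> bX) (Z : Top) (j : Y -> Z) (phi : bX -> Z) :
  compact_set (fun y => ~ X y) -> stone_cech_of X bX e ->
  compactification_of (fun _ => True) Z j -> continuous phi ->
  (forall x, X x -> phi (e x) = j x) ->
  (forall b, closure (fun c => ~ hewitt_in X bX e c) b -> exists y, ~ X y /\ phi b = j y) ->
  pseudocompact Y.
Proof.
  intros HK [[HbXc _] _] [_ [_ [[_ [_ Hj] ] _]]] Hphi Hphij Hcond f Hf.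
  destruct (compact_set_uniform_bound (fun _ => True) X e f HbXc) as [M1 HM1].
  { intros b _; destruct (classic (hewitt_in X bX e b)) as [Hb|Hb].
    - destruct (Hb f (continuous_on_R_sub _ X f (fun _ _ => I) Hf)) as [g [Hg Hge]].
      destruct (continuous_on_R_locally_bounded _ g b Hg (or_introl eq_refl))
        as [U [HU [Ub HUg]]].
      exists U, (Rabs (g b) + 1); repeat split; auto; intros x Xx Ux.
      rewrite <- (Hge x Xx); apply HUg; [exact Ux|right; eauto].
    - destruct (Hcond b) as [y [Hy Hby]]; [intros U _ Ub; exists b; auto|].
      destruct (continuous_on_R_locally_bounded _ f y Hf I) as [O [HO [Oy HOf]]].
      destruct (Hj O HO) as [V [HV HVj]].
      exists (fun a => V (phi a)), (Rabs (f y) + 1); repeat split; [exact (Hphi V HV)| |].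
      + rewrite Hby; apply HVj; auto.
      + intros x Xx Vx; rewrite (Hphij x Xx) in Vx; apply HOf; [apply HVj; auto|exact I]. }
  destruct (compact_set_uniform_bound (fun y => ~ X y) (fun _ => True) (fun y => y) f HK)
    as [M2 HM2].
  { intros y _; destruct (continuous_on_R_locally_bounded _ f y Hf I) as [O [HO [Oy HOf]]].
    exists O, (Rabs (f y) + 1); repeat split; auto; intros z _ Oz; apply HOf; auto. }
  exists (Rmax M1 M2); intro y; destruct (classic (X y)) as [Xy|Xy].
  - eapply Rle_trans; [apply (HM1 y Xy I)|apply Rmax_l].
  - eapply Rle_trans; [apply (HM2 y I Xy)|apply Rmax_r].
Qed.

Theorem lemma2p3 (Y : Top) (X : Y -> Prop) (bX : Top) (e : Y -> bX)
  (Z : Top) (j : Y -> Z) (phi : bX -> Z) :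
  tychonoff Y ->
  dense X ->
  compact_set (fun y => ~ X y) ->
  stone_cech_of X bX e ->
  compactification_of (fun _ => True) Z j ->
  continuous phi ->
  (forall x, X x -> phi (e x) = j x) ->
  (pseudocompact Y <->
   forall b : bX, closure (fun c => ~ hewitt_in X bX e c) b ->
     exists y, ~ X y /\ phi b = j y).
Proof.
  intros HY _ HK HbX HZ Hphi Hphij; split.
  - exact (pseudocompact_remainder_condition Y X bX e Z j phi HY HK HbX HZ Hphi Hphij).
  - exact (remainder_condition_pseudocompact Y X bX e Z j phi HK HbX HZ Hphi Hphij).
Qed.
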